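(* Let $\mathbf{A}$ be a filtered quantization of $A$ and $S=S(\mathbf{A})$ the set of nondegenerate short star-products on $A$ corresponding to $\mathbf{A}$. Then there is a map $\pi:S\to\mathrm{Aut}(\mathbf{A})$ to the group of filtration-preserving $s$-invariant automorphisms of $\mathbf{A}$ (sending a star-product to its twisting automorphism $g$) whose fiber $\pi^{-1}(g)$ is a subset of the dual space $(HH_0(\mathbf{A},\mathbf{A}g)^s)^*$ of the $s$-invariants in $HH_0(\mathbf{A},\mathbf{A}g)$.
   Context: $A=\bigoplus_{d\ge0}A_d$ commutative graded, $A_0=\mathbb{C}$, $\dim A_d<\infty$, Poisson bracket of degree $-2$; $s=(-1)^d$. Filtered quantization: filtered algebra with $\mathrm{gr}\,\mathbf{A}\cong A$, filtration-preserving involution $s$ with associated graded $(-1)^d$. A star-product $a*b=\sum_kC_k(a,b)$ ($C_k$ of degree $-2k$, $C_0$ = product, $C_1(a,b)-C_1(b,a)=\{a,b\}$) corresponds to $\mathbf{A}$ if $(A,* )$ is identified with $\mathbf{A}$ via a quantization map ($s$-equivariant, filtration-preserving linear iso with $\mathrm{gr}=\mathrm{id}$). Short: $C_k(a,b)=0$ for $k>\min(\deg a,\deg b)$; nondegenerate: $\mathrm{CT}(a*b)$ nondegenerate on each $A_i$. For such a star-product the functional $T=\mathrm{CT}$ on $\mathbf{A}$ satisfies $T(\mathbf{a}\mathbf{b})=T(\mathbf{b}g(\mathbf{a}))$ for a unique filtration-preserving automorphism $g$ commuting with $s$ (the twisting automorphism). $\mathbf{A}g$ is $\mathbf{A}$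 with right action twisted by $g$; $HH_0(\mathbf{A},\mathbf{A}g)=\mathbf{A}/\mathrm{span}\{\mathbf{a}\mathbf{b}-\mathbf{b}g(\mathbf{a})\}$. *)

(* Base field: C := R[i] for R : realType (a model of the
   complex numbers; every realType is isomorphic to the reals). *)
From mathcomp Require Import all_boot all_order all_algebra.
From mathcomp Require Import reals.
From mathcomp Require Export complex.

Set Implicit Arguments.
Unset Strict Implicit.
Unset Printing Implicit Defensive.

Import Order.TTheory GRing.Theory Num.Theory.
Local Open Scope ring_scope.

Section Defs.
Variable R : realType.
Local Notation C := (R[i]).

(*   pr d  : projection of A onto A_d                                   *)
(*   ct    : constant term; A_0 = C.1 is encoded by  pr 0 a = ct a *: 1 *)
Variable A : comAlgType C.
Variable pr : nat -> A -> A.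
Variable ct : A -> C.
Variable pb : A -> A -> A.

Definition linA (f : A -> A) := forall (c : C) x y, f (c *: x + y) = c *: f x + f y.

Definition hom (d : nat) (a : A) := pr d a = a.

Definition graded_poisson_algebra : Prop :=
  [/\
      [/\ (forall d, linA (pr d)),
          (forall d e a, pr d (pr e a) = if d == e then pr e a else 0)
        & (forall a, exists N, a = \sum_(d < N) pr d a)],
      (hom 0 1 /\ (forall i j a b, hom i a -> hom j b -> hom (i + j) (a * b))),
      ((1 : A) != 0 /\ (forall a, pr 0 a = ct a *: 1)),
      (forall d, exists s : seq A, forall a, hom d a ->
         exists c : 'I_(size s) -> C, a = \sum_(k < size s) c k *: s`_k)
    &
      [/\ (forall a, linA (pb a)),
          (forall a b, pb a b = - pb b a),
          (forall a b c, pb a (pb b c) + pb b (pb c a) + pb c (pb a b) = 0),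
          (forall a b c, pb a (b * c) = pb a b * c + b * pb a c)
        & (forall i j a b, hom i a -> hom j b ->
             if (2 <= i + j)%N then hom (i + j - 2) (pb a b) else pb a b = 0)]].

(*   sym i : the symbol map F_i B -> F_i B / F_(i-1) B = A_i  (gr B = A) *)
Variable B : algType C.
Variable F : nat -> B -> Prop.
Variable sym : nat -> B -> A.
Variable s : B -> B.

Definition linB (f : B -> B) := forall (c : C) x y, f (c *: x + y) = c *: f x + f y.

(* F_(i-1), with F_(-1) = 0 *)
Definition Fprev (i : nat) (x : B) : Prop :=
  match i with 0 => x = 0 | k.+1 => F k x end.

Definition ring_endo (f : B -> B) :=
  [/\ linB f, f 1 = 1 & forall x y, f (x * y) = f x * f y].

Definition filtered_quantization : Prop :=
  [/\
      [/\ (forall i, F i 0 /\ forall (c : C) x y, F i x -> F i y -> F i (c *: x + y)),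
          (forall i x, F i x -> F i.+1 x),
          (forall x, exists i, F i x)
        & (F 0 1 /\ (forall i j x y, F i x -> F j y -> F (i + j) (x * y)))],
      (* gr B = A as graded Poisson algebras, via the symbol maps *)
      [/\ (forall i x, F i x -> hom i (sym i x)),
          (forall i (c : C) x y, F i x -> F i y ->
              sym i (c *: x + y) = c *: sym i x + sym i y),
          (forall i x, F i x -> (sym i x = 0 <-> Fprev i x)),
          (forall i a, hom i a -> exists x, F i x /\ sym i x = a)
        & ((forall i j x y, F i x -> F j y -> sym (i + j) (x * y) = sym i x * sym j y) /\
          (forall i j x y, F i x -> F j y ->
             if (2 <= i + j)%N then
               F (i + j - 2) (x * y - y * x) /\
               sym (i + j - 2) (x * y - y * x) = pb (sym i x) (sym j y)
             else x * y - y * x = 0))]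
    &
      [/\ ring_endo s,
          (forall x, s (s x) = x),
          (forall i x, F i x -> F i (s x))
        & (forall i x, F i x -> sym i (s x) = (-1) ^+ i *: sym i x)]].

Definition quantization_map (Phi : A -> B) (Psi : B -> A) : Prop :=
  [/\ (forall (c : C) a b, Phi (c *: a + b) = c *: Phi a + Phi b),
      cancel Phi Psi, cancel Psi Phi,
      (forall i a, hom i a -> F i (Phi a) /\ sym i (Phi a) = a)
    & (forall i a, hom i a -> Phi ((-1) ^+ i *: a) = s (Phi a))].

(* components C_k of a star-product a * b = sum_k C_k(a,b) *)
Definition star_components (Ck : nat -> A -> A -> A) : Prop :=
  [/\ (forall k a, linA (Ck k a)),
      (forall k b, linA (fun a => Ck k a b)),
      (forall k i j a b, hom i a -> hom j b ->
         if (2 * k <= i + j)%N then hom (i + j - 2 * k) (Ck k a b)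
         else Ck k a b = 0),
      (forall a b, Ck 0%N a b = a * b)
    & (forall a b, Ck 1%N a b - Ck 1%N b a = pb a b)].

(* the star-product with components Ck is the one transported from B by Phi *)
Definition corresponds (Ck : nat -> A -> A -> A) (Phi : A -> B) : Prop :=
  forall i j a b, hom i a -> hom j b ->
    Phi (\sum_(k < (i + j).+1) Ck k a b) = Phi a * Phi b.

Definition short (Ck : nat -> A -> A -> A) : Prop :=
  forall k i j a b, hom i a -> hom j b -> (minn i j < k)%N -> Ck k a b = 0.

Definition starp (Phi : A -> B) (Psi : B -> A) (a b : A) : A := Psi (Phi a * Phi b).

Definition nondegenerate (Phi : A -> B) (Psi : B -> A) : Prop :=
  forall i a, hom i a -> a != 0 -> exists b, hom i b /\ ct (starp Phi Psi a b) != 0.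

(* membership in S(B): a nondegenerate short star-product corresponding to B,
   recorded together with its quantization map (Phi, Psi). *)
Definition in_S (Phi : A -> B) (Psi : B -> A) : Prop :=
  [/\ quantization_map Phi Psi,
      (exists Ck, [/\ star_components Ck, corresponds Ck Phi & short Ck])
    & nondegenerate Phi Psi].

(* the functional T = CT on B (transported through the quantization map) *)
Definition trT (Psi : B -> A) (x : B) : C := ct (Psi x).

Definition in_Aut (g : B -> B) : Prop :=
  [/\ ring_endo g,
      (exists ginv, cancel g ginv /\ cancel ginv g),
      (forall i x, F i x -> F i (g x))
    & (forall x, g (s x) = s (g x))].

Definition twisting (Psi : B -> A) (g : B -> B) : Prop :=
  in_Aut g /\ forall x y, trT Psi (x * y) = trT Psi (y * g x).

(* span{ x y - y g(x) } ; HH_0(B, Bg) = B / twcomm g *)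
Definition twcomm (g : B -> B) (z : B) : Prop :=
  exists l : seq (C * B * B),
    z = \sum_(t <- l) t.1.1 *: (t.1.2 * t.2 - t.2 * g t.1.2).

(* preimage in B of the s-invariants HH_0(B, Bg)^s *)
Definition HH0s_pre (g : B -> B) (x : B) : Prop := twcomm g (s x - x).

(* f : B -> C represents an element of (HH_0(B,Bg)^s)^* : it is linear and
   vanishes on twcomm g; two representatives define the same element iff
   they agree on HH0s_pre g. *)
Definition HH0s_dual_rep (g : B -> B) (f : B -> C) : Prop :=
  (forall (c : C) x y, f (c *: x + y) = c * f x + f y) /\
  (forall x, twcomm g x -> f x = 0).

End Defs.

(* Write (a, b) := CT(a * b) for a star-product in S.  Since C_k(a, b) has
   degree deg a + deg b - 2k and C_k vanishes for k > min(deg a, deg b), the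
   pairing is orthogonal for the grading; being nondegenerate on each finite
   dimensional A_i, it is nondegenerate on A, and every functional (a, -) is
   (-, v) for some v of degree at most deg a (a Gram matrix argument in each
   degree).  On the quantization B, T(x y) = (Psi x, Psi y), so T is a
   nondegenerate trace form: its Nakayama automorphism g, defined by
   T(x y) = T(y g(x)), is unique, is an automorphism, preserves the
   filtration by the degree bound, and commutes with s because T o s = T.
   T kills every x y - y g(x), so it defines a functional on HH_0(B, B g),
   and since T is s-invariant it is determined by its values on
   s-invariant classes.  Finally T determines the quantization map: for a of
   degree i, Phi(a) is the only lift of a in F_i that is T-orthogonal to
   F_(i-1). *)

From HB Require Import structures.
From mathcomp Require Import all_boot all_algebra.
From mathcomp Require Import reals zify.
From Stdlib Require Import IndefiniteDescription.

Set Implicit Arguments.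
Unset Strict Implicit.
Unset Printing Implicit Defensive.

Import GRing.Theory Num.Theory.
Local Open Scope ring_scope.

Section KermxTrmx.
Variables (K : fieldType) (n : nat) (M : 'M[K]_n).
Hypothesis kerM : (kermx M <= kermx M^T)%MS.

Lemma kermx_trmx_sub : (kermx M^T <= kermx M)%MS.
Proof.
have [_] := mxrank_leqif_eq kerM.
by rewrite !mxrank_ker mxrank_tr eqxx => /esym/andP[].
Qed.

Lemma sub_trmx_of_kermx : (M <= M^T)%MS.
Proof.
rewrite submxE -[cokermx _]trmxK -[M in M *m _]trmxK -trmx_mul.
rewrite -trmx0 (inj_eq trmx_inj).
apply/eqP/sub_kermxP; apply: submx_trans kerM; apply/sub_kermxP.
by rewrite -[M in _ *m M]trmxK -trmx_mul mulmx_coker trmx0.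
Qed.
End KermxTrmx.

Section GramMatrix.
Variables (K : fieldType) (V : lmodType K) (beta : {biscalar V}).
Variables (n : nat) (e : 'I_n -> V).

Definition lincomb (u : 'rV[K]_n) := \sum_k u 0 k *: e k.
Definition gram := \matrix_(k, l) beta (e k) (e l).

Lemma mul_gram u l : (u *m gram) 0 l = beta (lincomb u) (e l).
Proof.
by rewrite mxE linear_sumlz; apply: eq_bigr => k _; rewrite linearZl_LR mxE.
Qed.

Lemma mul_gram_tr u l : (u *m gram^T) 0 l = beta (e l) (lincomb u).
Proof.
by rewrite mxE linear_sumr; apply: eq_bigr => k _; rewrite linearZr_LR !mxE.
Qed.

Hypothesis lincomb_nondeg :
  forall u, (forall l, beta (lincomb u) (e l) = 0) -> lincomb u = 0.

Lemma kermx_gram : (kermx gram <= kermx gram^T)%MS.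
Proof.
apply/sub_kermxP/row_matrixP => i; rewrite row_mul row0; apply/rowP => l.
rewrite mul_gram_tr [RHS]mxE lincomb_nondeg ?linear0r // => k.
by rewrite -mul_gram -row_mul mulmx_ker row0 mxE.
Qed.

Lemma lincomb_nondeg_r u : (forall l, beta (e l) (lincomb u) = 0) -> lincomb u = 0.
Proof.
move=> u0; apply: lincomb_nondeg => l; rewrite -mul_gram.
have /sub_kermxP -> // : (u <= kermx gram)%MS.
  apply: submx_trans (kermx_trmx_sub kermx_gram); apply/sub_kermxP/rowP => k.
  by rewrite mul_gram_tr mxE.
by rewrite mxE.
Qed.

Lemma lincomb_repr_r u :
  exists w, forall l, beta (lincomb u) (e l) = beta (e l) (lincomb w).
Proof.
have /submxP[w uGw] : (u *m gram <= gram^T)%MS.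
  exact: submx_trans (submxMl _ _) (sub_trmx_of_kermx kermx_gram).
by exists w => l; rewrite -mul_gram -mul_gram_tr uGw.
Qed.

Lemma lincomb_repr_l u :
  exists w, forall l, beta (e l) (lincomb u) = beta (lincomb w) (e l).
Proof.
have kerGT : (kermx gram^T <= kermx gram^T^T)%MS.
  by rewrite trmxK kermx_trmx_sub ?kermx_gram.
have /submxP[w uGw] : (u *m gram^T <= gram)%MS.
  by apply: submx_trans (submxMl _ _) _; have := sub_trmx_of_kermx kerGT; rewrite trmxK.
by exists w => l; rewrite -mul_gram -mul_gram_tr uGw.
Qed.
End GramMatrix.

Section Grading.
Variables (K : fieldType) (V : lmodType K).

Definition grading (pr : nat -> V -> V) :=
  [/\ forall d, linear (pr d),
      forall d e a, pr d (pr e a) = if d == e then pr e a else 0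
    & forall a, exists N, a = \sum_(d < N) pr d a].

Variable pr : nat -> V -> V.
Hypothesis pr_grading : grading pr.

Let pr_linear d : linear (pr d). Proof. by case: pr_grading. Qed.
Let pr_idem d e a : pr d (pr e a) = if d == e then pr e a else 0.
Proof. by case: pr_grading. Qed.
Let pr_decomp a : exists N, a = \sum_(d < N) pr d a.
Proof. by case: pr_grading. Qed.

HB.instance Definition _ d := GRing.isLinear.Build K V V _ (pr d) (pr_linear d).

Definition deg_lt N a := forall d, (N <= d)%N -> pr d a = 0.

Lemma pr_hom d a : pr d (pr d a) = pr d a.
Proof. by rewrite pr_idem eqxx. Qed.

Lemma pr_sum_pr N d a :
  pr d (\sum_(e < N) pr e a) = if (d < N)%N then pr d a else 0.
Proof.
rewrite raddf_sum /=; case: ltnP => [dN | Nd].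
  rewrite (bigD1 (Ordinal dN)) //= pr_hom big1 ?addr0 // => e.
  by rewrite pr_idem -val_eqE eq_sym => /negbTE ->.
by apply: big1 => e _; rewrite pr_idem gtn_eqF // (leq_trans (ltn_ord e) Nd).
Qed.

Lemma pr_eq0 a : (forall d, pr d a = 0) -> a = 0.
Proof. by move=> a0; have [N ->] := pr_decomp a; apply: big1 => d _. Qed.

Lemma deg_ltP a : exists N, deg_lt N a.
Proof. by have [N aN] := pr_decomp a; exists N => d; rewrite aN pr_sum_pr ltnNge => ->. Qed.

Lemma deg_lt_sum N a : deg_lt N a -> a = \sum_(d < N) pr d a.
Proof.
move=> aN; apply/eqP; rewrite -subr_eq0; apply/eqP/pr_eq0 => d.
by rewrite raddfB /= pr_sum_pr; case: ltnP => [_ | /aN ->]; rewrite subrr.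
Qed.

Lemma deg_lt_le M N a : (M <= N)%N -> deg_lt M a -> deg_lt N a.
Proof. by move=> MN aM d Nd; apply: aM (leq_trans MN Nd). Qed.

Lemma pr_hom_eq0 d e a : pr e a = a -> d != e -> pr d a = 0.
Proof. by move=> <- /negbTE de; rewrite pr_idem de. Qed.

Lemma deg_lt_hom d a : pr d a = a -> deg_lt d.+1 a.
Proof. by move=> ad e de; apply: pr_hom_eq0 ad _; rewrite neq_ltn de orbT. Qed.

Lemma hom_lincomb d n (e : 'I_n -> V) u :
  (forall k, pr d (e k) = e k) -> pr d (lincomb e u) = lincomb e u.
Proof.
by move=> e_hom; rewrite raddf_sum /=; apply: eq_bigr => k _; rewrite linearZ /= e_hom.
Qed.

Section GradedForm.
Variable beta : {biscalar V}.
Hypothesis beta_orth :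
  forall i j a b, pr i a = a -> pr j b = b -> i != j -> beta a b = 0.
Hypothesis beta_nondeg :
  forall i a, pr i a = a -> (forall b, pr i b = b -> beta a b = 0) -> a = 0.

Lemma form_orth_l d a b : pr d b = b -> pr d a = 0 -> beta a b = 0.
Proof.
move=> bd ad; have [N /deg_lt_sum ->] := deg_ltP a.
rewrite linear_sumlz big1 // => e _; case: (eqVneq (e : nat) d) => [-> | ed].
  by rewrite ad linear0l.
exact: beta_orth (pr_hom e a) bd ed.
Qed.

Lemma form_orth_r d a b : pr d a = a -> pr d b = 0 -> beta a b = 0.
Proof.
move=> ad bd; have [N /deg_lt_sum ->] := deg_ltP b.
rewrite linear_sumr big1 // => e _; case: (eqVneq (e : nat) d) => [-> | ed].
  by rewrite bd linear0r.
by apply: beta_orth ad (pr_hom e b) _; rewrite eq_sym.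
Qed.

Lemma form_pr_l d a b : pr d b = b -> beta a b = beta (pr d a) b.
Proof.
move=> bd; rewrite -{1}(subrK (pr d a) a) linearDl (form_orth_l bd) ?add0r //.
by rewrite raddfB /= pr_hom subrr.
Qed.

Lemma form_pr_r d a b : pr d a = a -> beta a b = beta a (pr d b).
Proof.
move=> ad; rewrite -{1}(subrK (pr d b) b) linearDr (form_orth_r ad) ?add0r //.
by rewrite raddfB /= pr_hom subrr.
Qed.

Lemma form_nondeg_l a : (forall b, beta a b = 0) -> a = 0.
Proof.
move=> a0; apply: pr_eq0 => d; apply: beta_nondeg (pr_hom d a) _ => b bd.
by rewrite -form_pr_l.
Qed.

Lemma deg_lt_form_eq0 N a :
  deg_lt N a -> (forall d b, (d < N)%N -> pr d b = b -> beta a b = 0) -> a = 0.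
Proof.
move=> aN a0; apply: pr_eq0 => d; case: (ltnP d N) => [dN | /aN //].
by apply: beta_nondeg (pr_hom d a) _ => b bd; rewrite -form_pr_l // (a0 d).
Qed.

Lemma form_hom_deg_lt i a b : pr i a = a -> deg_lt i b -> beta a b = 0.
Proof. by move=> ai bi; rewrite (form_pr_r _ ai) bi // linear0r. Qed.

Hypothesis pr_fdim : forall d, exists s : seq V, forall a, pr d a = a ->
  exists c : 'I_(size s) -> K, a = \sum_(k < size s) c k *: s`_k.

Lemma hom_gram d : exists n (e : 'I_n -> V),
  [/\ forall k, pr d (e k) = e k,
      forall a, pr d a = a -> exists u, a = lincomb e u
    & forall u, (forall l, beta (lincomb e u) (e l) = 0) -> lincomb e u = 0].
Proof.
have [s span_s] := pr_fdim d; pose e (k : 'I_(size s)) := pr d s`_k.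
have e_hom k : pr d (e k) = e k by apply: pr_hom.
exists (size s), e; split=> // [a ad | u u0].
  have [c ac] := span_s a ad; exists (\row_k c k).
  by rewrite -ad {1}ac raddf_sum /=; apply: eq_bigr => k _; rewrite mxE linearZ.
apply: beta_nondeg (hom_lincomb u e_hom) _ => _ /span_s[c ->].
rewrite linear_sumr big1 // => k _.
by rewrite linearZr_LR (form_pr_r _ (hom_lincomb u e_hom)) u0 mulr0.
Qed.

Lemma hom_nondeg_r d v :
  pr d v = v -> (forall b, pr d b = b -> beta b v = 0) -> v = 0.
Proof.
have [n [e [e_hom span nondeg]]] := hom_gram d.
move=> vd v0; have [u vu] := span v vd; rewrite vu.
by apply: (lincomb_nondeg_r nondeg) => l; rewrite -vu v0.
Qed.

Lemma hom_repr_r d a : pr d a = a ->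
  exists v, pr d v = v /\ forall b, pr d b = b -> beta a b = beta b v.
Proof.
have [n [e [e_hom span nondeg]]] := hom_gram d.
move=> ad; have [u ->] := span a ad; have [w uw] := lincomb_repr_r nondeg u.
exists (lincomb e w); split=> [|_ /span[c ->]]; first exact: hom_lincomb.
rewrite [LHS]linear_sumr [RHS]linear_sumlz; apply: eq_bigr => k _.
by rewrite linearZr_LR linearZl_LR uw.
Qed.

Lemma hom_repr_l d a : pr d a = a ->
  exists v, pr d v = v /\ forall b, pr d b = b -> beta b a = beta v b.
Proof.
have [n [e [e_hom span nondeg]]] := hom_gram d.
move=> ad; have [u ->] := span a ad; have [w uw] := lincomb_repr_l nondeg u.
exists (lincomb e w); split=> [|_ /span[c ->]]; first exact: hom_lincomb.
rewrite [LHS]linear_sumlz [RHS]linear_sumr; apply: eq_bigr => k _.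
by rewrite linearZr_LR linearZl_LR uw.
Qed.

Lemma form_nondeg_r a : (forall b, beta b a = 0) -> a = 0.
Proof.
move=> a0; apply: pr_eq0 => d; apply: hom_nondeg_r (pr_hom d a) _ => b bd.
by rewrite -form_pr_r.
Qed.

Lemma form_repr_r a : exists v, forall b, beta a b = beta b v.
Proof.
have [N /deg_lt_sum aN] := deg_ltP a.
have /fin_all_exists[v vP] (d : 'I_N) := hom_repr_r (pr_hom d a).
exists (\sum_d v d) => b.
rewrite {1}aN linear_sumlz linear_sumr; apply: eq_bigr => d _.
have [vd av] := vP d.
by rewrite (form_pr_r _ (pr_hom d a)) av ?pr_hom // -form_pr_l.
Qed.

Lemma form_repr_l a : exists v, forall b, beta b a = beta v b.
Proof.
have [N /deg_lt_sum aN] := deg_ltP a.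
have /fin_all_exists[v vP] (d : 'I_N) := hom_repr_l (pr_hom d a).
exists (\sum_d v d) => b.
rewrite {1}aN linear_sumr linear_sumlz; apply: eq_bigr => d _.
have [vd av] := vP d.
by rewrite (form_pr_l _ (pr_hom d a)) av ?pr_hom // -form_pr_r.
Qed.

Lemma deg_lt_repr N a v :
  deg_lt N a -> (forall b, beta a b = beta b v) -> deg_lt N v.
Proof.
move=> aN av d Nd; apply: hom_nondeg_r (pr_hom d v) _ => b bd.
by rewrite -(form_pr_r _ bd) -av (form_pr_l _ bd) aN // linear0l.
Qed.
End GradedForm.
End Grading.

Section TwistingAutomorphism.
Variables (K : fieldType) (B : algType K) (T : B -> K).
Hypothesis T_linear : scalar T.
Hypothesis T_nondeg_l : forall x, (forall y, T (x * y) = 0) -> x = 0.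
Hypothesis T_nondeg_r : forall x, (forall y, T (y * x) = 0) -> x = 0.

HB.instance Definition _ := GRing.isLinear.Build K B K^o _ T T_linear.

Lemma trace_injl x x' : (forall y, T (x * y) = T (x' * y)) -> x = x'.
Proof.
move=> xx'; apply/eqP; rewrite -subr_eq0; apply/eqP/T_nondeg_l => y.
by rewrite mulrBl linearB /= xx' subrr.
Qed.

Lemma trace_injr x x' : (forall y, T (y * x) = T (y * x')) -> x = x'.
Proof.
move=> xx'; apply/eqP; rewrite -subr_eq0; apply/eqP/T_nondeg_r => y.
by rewrite mulrBr linearB /= xx' subrr.
Qed.

Variable g : B -> B.
Hypothesis g_twist : forall x y, T (x * y) = T (y * g x).

Lemma twist_uniq g' : (forall x y, T (x * y) = T (y * g' x)) -> g' =1 g.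
Proof. by move=> g'_twist x; apply: trace_injr => y; rewrite -g'_twist g_twist. Qed.

Lemma twist_linear : linear g.
Proof.
move=> c x y; apply: trace_injr => w.
by rewrite -g_twist mulrDr -scalerAr mulrDl -scalerAl !T_linear -!g_twist.
Qed.

Lemma twist1 : g 1 = 1.
Proof. by apply: trace_injr => w; rewrite -g_twist mul1r mulr1. Qed.

Lemma twistM x y : g (x * y) = g x * g y.
Proof.
by apply: trace_injr => w; rewrite -g_twist mulrA -g_twist mulrA -g_twist mulrA.
Qed.

Lemma twist_bij : (forall x, exists z, forall y, T (y * x) = T (z * y)) ->
  exists ginv, cancel g ginv /\ cancel ginv g.
Proof.
case/functional_choice => h h_twist; exists h; split=> x.
  by apply: trace_injl => y; rewrite -h_twist -g_twist.
by apply: trace_injr => y; rewrite -g_twist -h_twist.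
Qed.

Lemma twist_comm s : (forall x y, s (x * y) = s x * s y) -> involutive s ->
  (forall x, T (s x) = T x) -> forall x, g (s x) = s (g x).
Proof.
move=> sM sK Ts x; apply: trace_injr => w.
by rewrite -g_twist -{2}[w]sK -sM Ts -g_twist -{2}[x]sK -sM Ts.
Qed.
End TwistingAutomorphism.

Section Quantization.
Variables (R : realType) (A : comAlgType R[i]) (pr : nat -> A -> A) (ct : A -> R[i]).
Variables (pb : A -> A -> A) (B : algType R[i]) (F : nat -> B -> Prop).
Variables (sym : nat -> B -> A) (s : B -> B).
Hypotheses (HA : graded_poisson_algebra pr ct pb)
           (HB : filtered_quantization pr pb F sym s).

Let pr_grading : grading pr. Proof. by case: HA. Qed.
Let pr_fdim d : exists s : seq A, forall a, pr d a = a ->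
  exists c : 'I_(size s) -> R[i], a = \sum_(k < size s) c k *: s`_k.
Proof. by case: HA => _ _ _ /(_ d). Qed.
Let pr0_ct a : pr 0 a = ct a *: 1. Proof. by case: HA => _ _ []. Qed.

Let F_lincomb i c x y : F i x -> F i y -> F i (c *: x + y).
Proof. by case: HB => [[F_sub _ _ _] _ _]; case: (F_sub i) => _; apply. Qed.
Let F0 i : F i 0.
Proof. by case: HB => [[F_sub _ _ _] _ _]; case: (F_sub i) => ? _. Qed.
Let F_mono i x : F i x -> F i.+1 x.
Proof. by case: HB => [[_ F_mono _ _] _ _]; apply: F_mono. Qed.
Let sym_hom i x : F i x -> pr i (sym i x) = sym i x.
Proof. by case: HB => _ [sym_hom _ _ _ _] _; apply: sym_hom. Qed.
Let sym_lincomb i c x y :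
  F i x -> F i y -> sym i (c *: x + y) = c *: sym i x + sym i y.
Proof. by case: HB => _ [_ sym_lincomb _ _ _] _; apply: sym_lincomb. Qed.
Let sym_eq0 i x : F i x -> (sym i x = 0 <-> Fprev F i x).
Proof. by case: HB => _ [_ _ sym_eq0 _ _] _; apply: sym_eq0. Qed.
Let s_endo : ring_endo s. Proof. by case: HB => _ _ []. Qed.
Let sK : involutive s. Proof. by case: HB => _ _ [_ sK _ _]. Qed.
Let pr_linear d : linear (pr d). Proof. by case: pr_grading. Qed.
Let s_linear : linear s. Proof. by case: s_endo. Qed.

HB.instance Definition _ d := GRing.isLinear.Build R[i] A A _ (pr d) (pr_linear d).
HB.instance Definition _ := GRing.isLinear.Build R[i] B B _ s s_linear.

Lemma ct_linear : scalar ct.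
Proof.
move=> c x y; apply: (fmorph_inj (in_alg A)).
by rewrite /= -!pr0_ct linearP /= !pr0_ct scalerDl scalerA.
Qed.

HB.instance Definition _ := GRing.isLinear.Build R[i] A R[i]^o _ ct ct_linear.

Lemma ct_hom_eq0 i a : (0 < i)%N -> pr i a = a -> ct a = 0.
Proof.
move=> i_gt0 ai; apply: (fmorph_inj (in_alg A)).
by rewrite /= -pr0_ct (pr_hom_eq0 pr_grading ai) ?scale0r // eq_sym -lt0n.
Qed.

Lemma F_sub i x y : F i x -> F i y -> F i (x - y).
Proof. by move=> Fx Fy; rewrite addrC -scaleN1r; apply: F_lincomb. Qed.

Lemma sym_sub i x y : F i x -> F i y -> sym i (x - y) = sym i x - sym i y.
Proof. by move=> Fx Fy; rewrite addrC -scaleN1r sym_lincomb // scaleN1r addrC. Qed.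

Lemma F_le i j x : (i <= j)%N -> F i x -> F j x.
Proof.
move/subnKC <- => Fx; elim: (j - i)%N => [|k IH]; first by rewrite addn0.
by rewrite addnS; apply: F_mono.
Qed.

Lemma F_sum i (I : finType) (f : I -> B) : (forall k, F i (f k)) -> F i (\sum_k f k).
Proof.
move=> Ff; apply: (big_ind (F i) (F0 i)) => [x y Fx Fy | k _]; last exact: Ff.
by rewrite -[x]scale1r; apply: F_lincomb.
Qed.

Section QuantizationMap.
Variables (Phi : A -> B) (Psi : B -> A).
Hypothesis HS : in_S pr ct pb F sym s Phi Psi.

Lemma Phi_linear : linear Phi. Proof. by case: HS => [[]]. Qed.
Let PhiK : cancel Phi Psi. Proof. by case: HS => [[]]. Qed.
Let PsiK : cancel Psi Phi. Proof. by case: HS => [[]]. Qed.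
Lemma Phi_hom i a : pr i a = a -> F i (Phi a) /\ sym i (Phi a) = a.
Proof. by case: HS => [[_ _ _ Phi_hom _] _ _]; apply: Phi_hom. Qed.
Let Phi_sign i a : pr i a = a -> Phi ((-1) ^+ i *: a) = s (Phi a).
Proof. by case: HS => [[_ _ _ _ Phi_sign] _ _]; apply: Phi_sign. Qed.

HB.instance Definition _ := GRing.isLinear.Build R[i] A B _ Phi Phi_linear.
HB.instance Definition _ := GRing.isLinear.Build R[i] B A _ Psi (can2_linear PhiK PsiK).

Lemma Fprev_sub_Phi_sym i x : F i x -> Fprev F i (x - Phi (sym i x)).
Proof.
move=> Fx; have [FPhi symPhi] := Phi_hom (sym_hom Fx).
by apply/(sym_eq0 (F_sub Fx FPhi)); rewrite sym_sub // symPhi subrr.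
Qed.

Lemma deg_lt_Psi i x : Fprev F i x -> deg_lt pr i (Psi x).
Proof.
elim: i x => [|i IH] x /= Fx d di; first by rewrite Fx !linear0.
have := IH _ (Fprev_sub_Phi_sym Fx); rewrite linearB /= PhiK => low.
rewrite -(subrK (sym i x) (Psi x)) linearD /= (low d (ltnW di)) add0r.
exact (deg_lt_hom pr_grading (sym_hom Fx) di).
Qed.

Lemma F_Phi n a : deg_lt pr n.+1 a -> F n (Phi a).
Proof.
move=> /(deg_lt_sum pr_grading) ->; rewrite linear_sum; apply: F_sum => k.
by apply: F_le (Phi_hom (pr_hom pr_grading k a)).1; rewrite -ltnS.
Qed.

Definition star_pairing a b := ct (starp Phi Psi a b).

Lemma star_pairing_bilinear : bilinear_for *%R *%R star_pairing.
Proof.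
split=> [b c x y | a c x y]; rewrite /star_pairing /starp linearP /=.
  by rewrite mulrDl -scalerAl !linearP.
by rewrite mulrDr -scalerAr !linearP.
Qed.

HB.instance Definition _ :=
  bilinear_isBilinear.Build R[i] A A R[i] *%R *%R star_pairing star_pairing_bilinear.

Lemma star_pairing_orth i j a b : pr i a = a -> pr j b = b -> i != j -> star_pairing a b = 0.
Proof.
move=> ai bj ij; case: HS => _ [Ck [[_ _ Ck_hom _ _] corr short]] _.
rewrite /star_pairing /starp -(corr i j a b ai bj) PhiK linear_sum big1 // => k _.
have := Ck_hom k i j a b ai bj; case: ifP => [le_2k Ck_deg | _ ->]; last exact: linear0.
(* C_k(a, b) has degree i + j - 2k; if that is 0 then k > min(i, j) and shortness kills it *)
case: (posnP (i + j - 2 * k)) => [deg0 | pos]; last exact: ct_hom_eq0 pos Ck_deg.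
have lt_k : (minn i j < k)%N by move/eqP: ij; lia.
by rewrite (short k i j a b ai bj lt_k) linear0.
Qed.

Lemma star_pairing_nondeg i a :
  pr i a = a -> (forall b, pr i b = b -> star_pairing a b = 0) -> a = 0.
Proof.
case: HS => _ _ nondeg ai a0; case: (eqVneq a 0) => // /(nondeg i a ai)[b [bi]].
by rewrite -/(star_pairing a b) a0 ?eqxx.
Qed.

Lemma trT_linear : scalar (trT ct Psi).
Proof. by move=> c x y; rewrite /trT !linearP. Qed.

HB.instance Definition _ := GRing.isLinear.Build R[i] B R[i]^o _ (trT ct Psi) trT_linear.

Lemma trT_mul x y : trT ct Psi (x * y) = star_pairing (Psi x) (Psi y).
Proof. by rewrite /star_pairing /starp !PsiK. Qed.

Lemma trT_s x : trT ct Psi (s x) = trT ct Psi x.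
Proof.
rewrite /trT -[x]PsiK; set a := Psi x.
have [N /(deg_lt_sum pr_grading) aN] := deg_ltP pr_grading a.
rewrite [in LHS]aN [in RHS]aN !linear_sum /=; apply: eq_bigr => i _.
rewrite -(Phi_sign (pr_hom pr_grading i a)) !PhiK linearZ /=.
case: (posnP i) => [-> | i_gt0]; first by rewrite expr0 mul1r.
by rewrite (ct_hom_eq0 i_gt0 (pr_hom pr_grading i a)) mulr0.
Qed.

Lemma trT_nondeg_l x : (forall y, trT ct Psi (x * y) = 0) -> x = 0.
Proof.
move=> x0; rewrite -[x]PsiK; suff -> : Psi x = 0 by rewrite linear0.
apply: (form_nondeg_l pr_grading star_pairing_orth star_pairing_nondeg) => b.
by rewrite /= -[b]PhiK -trT_mul x0.
Qed.

Lemma trT_nondeg_r x : (forall y, trT ct Psi (y * x) = 0) -> x = 0.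
Proof.
move=> x0; rewrite -[x]PsiK; suff -> : Psi x = 0 by rewrite linear0.
apply: (form_nondeg_r pr_grading star_pairing_orth star_pairing_nondeg pr_fdim) => b.
by rewrite /= -[b]PhiK -trT_mul x0.
Qed.

Lemma trT_repr_r x : exists z, forall y, trT ct Psi (x * y) = trT ct Psi (y * z).
Proof.
have [v xv] := form_repr_r pr_grading star_pairing_orth star_pairing_nondeg pr_fdim (Psi x).
by exists (Phi v) => y; rewrite !trT_mul PhiK xv.
Qed.

Lemma trT_repr_l x : exists z, forall y, trT ct Psi (y * x) = trT ct Psi (z * y).
Proof.
have [v xv] := form_repr_l pr_grading star_pairing_orth star_pairing_nondeg pr_fdim (Psi x).
by exists (Phi v) => y; rewrite !trT_mul PhiK xv.
Qed.

Lemma F_twist g : (forall x y, trT ct Psi (x * y) = trT ct Psi (y * g x)) ->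
  forall i x, F i x -> F i (g x).
Proof.
move=> g_twist i x Fx; rewrite -[g x]PsiK; apply: F_Phi.
have Psi_x : deg_lt pr i.+1 (Psi x) by apply: deg_lt_Psi.
apply: (deg_lt_repr pr_grading star_pairing_orth star_pairing_nondeg pr_fdim Psi_x).
by move=> b /=; rewrite -[b]PhiK -!trT_mul g_twist.
Qed.

Lemma twisting_exists_uniq :
  exists g, twisting ct F s Psi g /\ forall g', twisting ct F s Psi g' -> g' =1 g.
Proof.
have [g g_twist] := functional_choice _ trT_repr_r.
exists g; split=> [|g' [_ g'_twist]];
  last exact (twist_uniq trT_linear trT_nondeg_r g_twist g'_twist).
split=> //; split; first split.
- exact (twist_linear trT_linear trT_nondeg_r g_twist).
- exact (twist1 trT_linear trT_nondeg_r g_twist).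
- exact (twistM trT_linear trT_nondeg_r g_twist).
- exact (twist_bij trT_linear trT_nondeg_l trT_nondeg_r g_twist trT_repr_l).
- exact: F_twist g_twist.
- by case: s_endo => _ _ sM; exact (twist_comm trT_linear trT_nondeg_r g_twist sM sK trT_s).
Qed.

Lemma HH0s_dual_rep_trT g : twisting ct F s Psi g -> HH0s_dual_rep g (trT ct Psi).
Proof.
case=> _ g_twist; split=> [|_ [l ->]]; first exact: trT_linear.
rewrite linear_sum big1 // => t _.
by rewrite linearZ /= linearB /= g_twist subrr mulr0.
Qed.

Lemma trT_hom_lt i j a y :
  pr i a = a -> F j y -> (j < i)%N -> trT ct Psi (Phi a * y) = 0.
Proof.
move=> ai Fy ji; rewrite -[y]PsiK trT_mul !PhiK.
exact (form_hom_deg_lt pr_grading star_pairing_orth ai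
  (deg_lt_le ji (deg_lt_Psi (i := j.+1) Fy))).
Qed.

Lemma trT_Fprev_eq0 i z : Fprev F i z ->
  (forall j y, (j < i)%N -> F j y -> trT ct Psi (z * y) = 0) -> z = 0.
Proof.
move=> Fz z0; rewrite -[z]PsiK; suff -> : Psi z = 0 by rewrite linear0.
have Psi_z := deg_lt_Psi Fz.
apply: (deg_lt_form_eq0 pr_grading star_pairing_orth star_pairing_nondeg Psi_z) => d b di bd.
rewrite /= -[b]PhiK -trT_mul (z0 d) //.
exact: (Phi_hom bd).1.
Qed.

Lemma Phi_unique_lift i a x : pr i a = a -> F i x -> sym i x = a ->
  (forall j y, (j < i)%N -> F j y -> trT ct Psi (x * y) = 0) -> x = Phi a.
Proof.
move=> ai Fx sym_x x_orth; apply/eqP; rewrite -subr_eq0; apply/eqP.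
have := Fprev_sub_Phi_sym Fx; rewrite sym_x => Fz.
apply: (trT_Fprev_eq0 Fz) => j y ji Fy.
by rewrite mulrBl linearB /= (x_orth j) // (trT_hom_lt ai Fy ji) subrr.
Qed.

Lemma trT_add_s x : trT ct Psi (x + s x) = trT ct Psi x *+ 2.
Proof. by rewrite linearD /= trT_s mulr2n. Qed.

End QuantizationMap.

Section TwoQuantizationMaps.
Variables (Phi1 Phi2 : A -> B) (Psi1 Psi2 : B -> A).
Hypotheses (HS1 : in_S pr ct pb F sym s Phi1 Psi1)
           (HS2 : in_S pr ct pb F sym s Phi2 Psi2).

HB.instance Definition _ := GRing.isLinear.Build R[i] A B _ Phi1 (Phi_linear HS1).
HB.instance Definition _ := GRing.isLinear.Build R[i] A B _ Phi2 (Phi_linear HS2).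

Lemma trT_eq_of_HH0s_pre g :
  (forall x, HH0s_pre s g x -> trT ct Psi1 x = trT ct Psi2 x) ->
  trT ct Psi1 =1 trT ct Psi2.
Proof.
move=> T12 x; have : HH0s_pre s g (x + s x).
  by exists [::]; rewrite big_nil linearD /= sK [s x + x]addrC subrr.
by move/T12/eqP; rewrite (trT_add_s HS1) (trT_add_s HS2) eqr_pMn2r // => /eqP.
Qed.

Lemma Phi_eq_of_trT_eq : trT ct Psi1 =1 trT ct Psi2 -> Phi1 =1 Phi2.
Proof.
move=> T12 a; have [N /(deg_lt_sum pr_grading) ->] := deg_ltP pr_grading a.
rewrite !linear_sum; apply: eq_bigr => k _; have ak := pr_hom pr_grading k a.
have [F2a sym2a] := Phi_hom HS2 ak.
apply/esym/(Phi_unique_lift HS1 ak F2a sym2a) => j y jk Fy.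
by rewrite T12 (trT_hom_lt HS2 ak Fy jk).
Qed.

End TwoQuantizationMaps.
End Quantization.

Theorem corollary3p5 (R : realType) (A : comAlgType R[i]) (pr : nat -> A -> A)
  (ct : A -> R[i]) (pb : A -> A -> A) (B : algType R[i]) (F : nat -> B -> Prop)
  (sym : nat -> B -> A) (s : B -> B) :
  graded_poisson_algebra pr ct pb ->
  filtered_quantization pr pb F sym s ->
  (* pi : S -> Aut(B), sending a star-product to its twisting automorphism *)
  (forall Phi Psi, in_S pr ct pb F sym s Phi Psi ->
     exists g, twisting ct F s Psi g /\
       forall g', twisting ct F s Psi g' -> forall x, g' x = g x) /\
  (* the fiber pi^-1(g) embeds into (HH_0(B,Bg)^s)^* via (Phi,Psi) |-> T *)
  (forall g Phi Psi, in_S pr ct pb F sym s Phi Psi -> twisting ct F s Psi g ->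
     HH0s_dual_rep g (trT ct Psi)) /\
  (forall g Phi1 Psi1 Phi2 Psi2,
     in_S pr ct pb F sym s Phi1 Psi1 -> in_S pr ct pb F sym s Phi2 Psi2 ->
     twisting ct F s Psi1 g -> twisting ct F s Psi2 g ->
     (forall x, HH0s_pre s g x -> trT ct Psi1 x = trT ct Psi2 x) ->
     forall a, Phi1 a = Phi2 a).
Proof.
move=> HA HB; split=> [Phi Psi HS | ]; first exact (twisting_exists_uniq HA HB HS).
split=> [g Phi Psi HS twist_g | g Phi1 Psi1 Phi2 Psi2 HS1 HS2 _ _ T12].
  exact (HH0s_dual_rep_trT HA HS twist_g).
exact (Phi_eq_of_trT_eq HA HB HS1 HS2 (trT_eq_of_HH0s_pre HA HB HS1 HS2 T12)).
Qed.
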